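(* For $v \in l^2(\mathbb{T}_t; \mathbb{R}^{m_2})$, $k\in\mathbb{T}_t$, $\widetilde{v}_k \in l^2(k; \mathbb{R}^{m_2})$ and $\varepsilon \in\mathbb{R}$, let $v^\varepsilon_\ell=v_k+\varepsilon \widetilde{v}_k$ if $\ell=k$ and $v^\varepsilon_\ell=v_\ell$ if $\ell\neq k$, $\ell\in \mathbb{T}_t$, and $v^\varepsilon=(v_t^\varepsilon, \ldots, v^\varepsilon_{N-1})$. Then \begin{eqnarray*} &&J_2(k, X_k; \alpha^t(x, v^\varepsilon)|_{\mathbb{T}_{k}}, (v_k+\varepsilon \widetilde{v}_k, v|_{\mathbb{T}_{k+1}}))- J_2(k, X_k; \alpha^t(x, v)|_{\mathbb{T}_{k}}, v|_{\mathbb{T}_{k}})\\ &&=2\varepsilon \Big{[}\widetilde{B}_k^TZ_{k+1}+\widetilde{B}_{k}^T\overline{Z}_{k+1}^{(k)}+W_2v_k +(H_k^2)^TR_2(H_k^1X_k+H_k^2v_k+H_k^3\pi_{k+1})\\ &&\hphantom{=}+\sum_{i=t}^{k-1}C_{k}\widetilde{A}_{k-1}\cdots \widetilde{A}_{i+1}\widetilde{C}_{i}^T\overline{Z}_{i+1}^{(k)} \Big{]}^T\widetilde{v}_k+\varepsilon^2\widehat{J}_2(k, 0; \widetilde{v}_k). \end{eqnarray*} Here $(X,\pi)$ solves $X_{k+1}=\widetilde{A}_kX_k+\widetilde{B}_kv_{k}+\widetilde{C}_k\pi_{k+1}$, $\pi_k=C_k^Tv_k+\widetilde{A}_k^T\pi_{k+1}$,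 $X_t=x$, $\pi_N=0$, $k\in\mathbb{T}_t$; $Z$ solves $Z_k=Q_2X_{k}+A^TZ_{k+1}$, $Z_{N}=G_2X_N$, $k \in \mathbb{T}_t$; and for each $k\in\mathbb{T}_t$, $\overline{Z}^{(k)}$ solves $\overline{Z}^{(k)}_{\ell}=(H_{\ell}^1)^TR_2(H_{\ell}^1X_{\ell}+H^2_{\ell}v_{\ell}+H^3_{\ell}\pi_{\ell+1})-(H_{\ell}^1)^TB_1^TZ_{\ell+1}+\widetilde{A}_{\ell}^T\overline{Z}^{(k)}_{\ell+1}$ for $\ell\in\mathbb{T}_{k}$, $\overline{Z}^{(k)}_{i}=\widetilde{A}_{i}^T\overline{Z}^{(k)}_{i+1}$ for $i\in \{t, \ldots,k-1\}$, $\overline{Z}^{(k)}_{N}=0$. Furthermore, \begin{eqnarray*} \widehat{J}_2(k, 0; \widetilde{v}_k)&=&\sum_{\ell=k}^{N-1}\xi_\ell^TQ_2\xi_\ell+ \sum_{\ell=k+1}^{N-1}(\eta^{(k)}_{\ell})^T(H_{\ell}^1)^TR_2H_{\ell}^1\eta^{(k)}_{\ell} + \widetilde{v}_k^TW_{2} \widetilde{v}_k \\ &&+\xi_{N}^TG_2\xi_{N}+(H_k^1\eta^{(k)}_k+H^2_k \widetilde{v}_k)^TR_2(H_k^1\eta^{(k)}_k+H^2_k \widetilde{v}_k), \end{eqnarray*} where $\eta^{(k)}_{t}=0$, $\eta^{(k)}_{i+1}=\widetilde{A}_{i}\eta^{(k)}_{i}+ \widetilde{C}_{i} \widetilde{A}_{i+1}^T\cdots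 \widetilde{A}_{k-1}^TC_{k}^T\widetilde{v}_k$ for $i\in \{t, \ldots, k-1\}$, $\eta^{(k)}_{k+1}=\widetilde{A}_k\eta^{(k)}_k+ \widetilde{B}_k\widetilde{v}_k$, $\eta^{(k)}_{\ell+1}=\widetilde{A}_\ell\eta^{(k)}_{\ell}$ for $\ell\in \mathbb{T}_{k+1}$; and $\xi_k=0$, $\xi_{k+1}=A\xi_k-B_1H_k^1\eta^{(k)}_k+ \widetilde{B}_k\widetilde{v}_k$, $\xi_{\ell+1}=A\xi_\ell-B_1H_{\ell}^1\eta^{(k)}_{\ell}$ for $\ell\in \mathbb{T}_{k+1}$. The product $\widetilde{A}_{i+1}^T\cdots \widetilde{A}_{k-1}^T$ equals $I$ if $i+1>k-1$, and $\widetilde{A}_{k-1}\cdots \widetilde{A}_{i+1}$ is its transpose.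
   Context: Let $N>2$ be an integer, $\mathbb{T}_t=\{t,\ldots,N-1\}$ for $t\in\{0,\ldots,N-1\}$, $l^2(\mathbb{T}_t;\mathbb{R}^m)$ the space of sequences $\{\rho_k,k\in\mathbb{T}_t\}$ with $\rho_k\in\mathbb{R}^m$, $l^2(k;\mathbb{R}^m)=\mathbb{R}^m$, and for a process $v$ let $v|_{\mathbb{T}_k}=(v_k,\ldots,v_{N-1})$. Consider the system $X_{k+1}=AX_k+B_1u_k+B_2v_k$, $X_t=x$, $k\in\mathbb{T}_t$, with cost functionals $J_i(t,x;u,v)=\sum_{k=t}^{N-1}(X_k^TQ_iX_k+u_k^TR_iu_k+v_k^TW_iv_k)+X_N^TG_iX_N$, $i=1,2$, deterministic matrices and $Q_i,G_i,R_i,W_i$ nonnegative definite; $J_i(k,y;\cdot,\cdot)$ denotes the same functional started at time $k$ from state $y$ with controls on $\mathbb{T}_k$ (the state inside is propagated by the original dynamics). Assume $M_k=B_1^TP_{k+1}B_1+R_1$, $k\in\mathbb{T}_t$, are positive definite, where $P_k=Q_1+A^TP_{k+1}A-A^TP_{k+1}B_1M_k^{-1}B_1^TP_{k+1}A$, $P_N=G_1$. Set $H^1_k=M_k^{-1}B_1^TP_{k+1}A$, $H^2_k=M_k^{-1}B_1^TP_{k+1}B_2$, $H^3_k=M_k^{-1}B_1^T$, $\widetilde{A}_k=A-B_1H^1_k$, $\widetilde{B}_k=B_2-B_1H^2_k$, $\widetilde{C}_k=-B_1H^3_k$, $C_k=(B_2^T-B_2^TP_{k+1}B_1M_k^{-1}B_1^T)P_{k+1}A$.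 The follower's equilibrium response map is $[\alpha^t(x,v)]_k=-(H^1_kX_k+H^2_kv_k+H^3_k\pi_{k+1})$, $k\in\mathbb{T}_t$, where $(X,\pi)$ solves $X_{k+1}=\widetilde{A}_kX_k+\widetilde{B}_kv_k+\widetilde{C}_k\pi_{k+1}$, $\pi_k=C_k^Tv_k+\widetilde{A}_k^T\pi_{k+1}$, $X_t=x$, $\pi_N=0$. *)

From HB Require Import structures.
From mathcomp Require Import all_boot all_order all_algebra.
Set Implicit Arguments. Unset Strict Implicit. Unset Printing Implicit Defensive.
Import Order.TTheory GRing.Theory Num.Theory.
Local Open Scope ring_scope.

Definition qf {R : realFieldType} {p : nat} (M : 'M[R]_p) (x : 'cV[R]_p) : R :=
  (x^T *m M *m x) 0 0.

Definition nonneg_def {R : realFieldType} {p : nat} (M : 'M[R]_p) : Prop :=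
  M^T = M /\ forall x : 'cV[R]_p, 0 <= qf M x.

Definition pos_def {R : realFieldType} {p : nat} (M : 'M[R]_p) : Prop :=
  M^T = M /\ forall x : 'cV[R]_p, x != 0 -> 0 < qf M x.

(* mprod F a len = F (a+len-1) *m ... *m F a ; identity if len = 0 *)
Fixpoint mprod {R : realFieldType} {p : nat} (F : nat -> 'M[R]_p) (a len : nat)
  : 'M[R]_p :=
  match len with
  | 0 => 1%:M
  | len'.+1 => F (a + len')%N *m mprod F a len'
  end.

(* forward recursion: s t = x0, s (k+1) = step k (s k) for k >= t *)
Definition frec {T : Type} (t : nat) (x0 : T) (step : nat -> T -> T) (k : nat) : T :=
  (fix aux j := match j with 0 => x0 | j'.+1 => step (t + j')%N (aux j') end) (k - t)%N.

(* backward recursion: s k = term for k >= N, s k = step k (s (k+1)) for k < N *)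
Definition brec {T : Type} (N : nat) (term : T) (step : nat -> T -> T) (k : nat) : T :=
  (fix aux j := match j with 0 => term | j'.+1 => step (N - j)%N (aux j') end) (N - k)%N.

Section LQ.
Context {R : realFieldType} {n m1 m2 : nat}.
Variable N : nat.
Variables (A : 'M[R]_n) (B1 : 'M[R]_(n, m1)) (B2 : 'M[R]_(n, m2)).
Variables (Q1 G1 : 'M[R]_n) (R1 : 'M[R]_m1).

Definition Pmat : nat -> 'M[R]_n :=
  brec N G1 (fun _ P => Q1 + A^T *m P *m A
                 - A^T *m P *m B1 *m invmx (B1^T *m P *m B1 + R1) *m B1^T *m P *m A).

Definition Mmat (k : nat) : 'M[R]_m1 := B1^T *m Pmat k.+1 *m B1 + R1.

Definition H1 (k : nat) : 'M[R]_(m1, n) := invmx (Mmat k) *m B1^T *m Pmat k.+1 *m A.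
Definition H2 (k : nat) : 'M[R]_(m1, m2) := invmx (Mmat k) *m B1^T *m Pmat k.+1 *m B2.
Definition H3 (k : nat) : 'M[R]_(m1, n) := invmx (Mmat k) *m B1^T.

Definition Atl (k : nat) : 'M[R]_n := A - B1 *m H1 k.
Definition Btl (k : nat) : 'M[R]_(n, m2) := B2 - B1 *m H2 k.
Definition Ctl (k : nat) : 'M[R]_n := - (B1 *m H3 k).
Definition Cm (k : nat) : 'M[R]_(m2, n) :=
  (B2^T - B2^T *m Pmat k.+1 *m B1 *m invmx (Mmat k) *m B1^T) *m Pmat k.+1 *m A.

Definition costate (v : nat -> 'cV[R]_m2) : nat -> 'cV[R]_n :=
  brec N 0 (fun k p => (Cm k)^T *m v k + (Atl k)^T *m p).

Definition fstate (t : nat) (x : 'cV[R]_n) (v : nat -> 'cV[R]_m2) : nat -> 'cV[R]_n :=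
  frec t x (fun k X => Atl k *m X + Btl k *m v k + Ctl k *m costate v k.+1).

Definition alpha (t : nat) (x : 'cV[R]_n) (v : nat -> 'cV[R]_m2) (k : nat) : 'cV[R]_m1 :=
  - (H1 k *m fstate t x v k + H2 k *m v k + H3 k *m costate v k.+1).

Definition Jcost (Q G : 'M[R]_n) (Rw : 'M[R]_m1) (W : 'M[R]_m2) (k : nat)
    (y : 'cV[R]_n) (u : nat -> 'cV[R]_m1) (v : nat -> 'cV[R]_m2) : R :=
  let Xs := frec k y (fun l X => A *m X + B1 *m u l + B2 *m v l) in
  \sum_(k <= l < N) (qf Q (Xs l) + qf Rw (u l) + qf W (v l)) + qf G (Xs N).

End LQ.

From Pilot Require Import Defs.
From HB Require Import structures.
From mathcomp Require Import all_boot all_order all_algebra.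
From mathcomp Require Import ring lra zify.
Set Implicit Arguments. Unset Strict Implicit. Unset Printing Implicit Defensive.
Import Order.TTheory GRing.Theory Num.Theory.
Local Open Scope ring_scope.

(* The follower's response (X, pi, alpha) is affine in the leader's control v
   and the cost J_2 is quadratic, so perturbing v at time k by eps vt perturbs
   the costate, the state and the response by eps times their responses to an
   impulse vt at time k (this is eta), and J_2 expands exactly as
   J_2 + 2 eps L + eps^2 Jhat, where Jhat is J_2 along the perturbed trajectory
   xi started from 0.  The linear term L becomes the stated gradient after two
   discrete summations by parts: against the adjoint Z of the open-loop
   dynamics, and against Zbar, whose recursion on [t, k) carries the costate
   perturbation at times before k back to time k. *)

Section Recursions.
Variable T : Type.
Implicit Types (step : nat -> T -> T) (y : nat -> T).

Lemma frec_t t (x0 : T) step : frec t x0 step t = x0.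
Proof. by rewrite /frec subnn. Qed.

Lemma frecS t (x0 : T) step l : (t <= l)%N ->
  frec t x0 step l.+1 = step l (frec t x0 step l).
Proof. by move=> tl; rewrite /frec subSn //=; congr step; lia. Qed.

Lemma frec_unique t (x0 : T) step M y : y t = x0 ->
    (forall l, (t <= l < M)%N -> y l.+1 = step l (y l)) ->
  forall l, (t <= l <= M)%N -> frec t x0 step l = y l.
Proof.
move=> yt ys; elim=> [|l IH] /andP[tl lM].
  by move: tl; rewrite leqn0 => /eqP <-; rewrite frec_t.
case: (ltngtP t l.+1) tl => // [tl|<-] _; last by rewrite frec_t.
by rewrite frecS ?IH ?ys //; lia.
Qed.

Lemma brec_N N (term : T) step l : (N <= l)%N -> brec N term step l = term.
Proof. by move=> Nl; rewrite /brec (eqP (_ : (N - l == 0)%N)) // subn_eq0. Qed.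

Lemma brecS N (term : T) step l : (l < N)%N ->
  brec N term step l = step l (brec N term step l.+1).
Proof.
by move=> lN; rewrite /brec (_ : (N - l = (N - l.+1).+1)%N) /=; [congr step|]; lia.
Qed.

Lemma brec_unique N (term : T) step y :
    (forall l, (l < N)%N -> y l = step l (y l.+1)) ->
    (forall l, (N <= l)%N -> y l = term) ->
  forall l, brec N term step l = y l.
Proof.
move=> ys yN l; have [j] := ubnP (N - l); elim: j l => // j IH l lj.
case: (ltnP l N) => lN; last by rewrite brec_N // yN.
by rewrite brecS // ys // IH //; lia.
Qed.

End Recursions.

Lemma mprodS {R : realFieldType} {p : nat} (F : nat -> 'M[R]_p) a len :
  mprod F a len.+1 = mprod F a.+1 len *m F a.
Proof.
elim: len => [|len IH]; first by rewrite /= addn0 mulmx1 mul1mx.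
rewrite -[mprod F a len.+2]/(F (a + len.+1)%N *m mprod F a len.+1) IH.
by rewrite -[mprod F a.+1 len.+1]/(F (a.+1 + len)%N *m _) mulmxA addSnnS.
Qed.

Definition impulse {V : zmodType} (k : nat) (a : V) (l : nat) : V :=
  if l == k then a else 0.

Lemma sum_impulse {V : zmodType} {W : nmodType} (F : nat -> V -> W) k N a :
  (k < N)%N -> (forall l, F l 0 = 0) -> \sum_(k <= l < N) F l (impulse k a l) = F k a.
Proof.
move=> kN F0; rewrite (big_ltn kN) /impulse eqxx big_nat_cond big1 ?addr0 //.
by move=> l /andP[/andP[kl _] _]; rewrite gtn_eqF.
Qed.

Definition dot {R : comRingType} {p : nat} (a b : 'cV[R]_p) : R := (a^T *m b) 0 0.

Section Dot.
Context {R : comRingType} {p : nat}.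
Implicit Types a b c : 'cV[R]_p.

Lemma dotDl a b c : dot (a + b) c = dot a c + dot b c.
Proof. by rewrite /dot linearD /= mulmxDl mxE. Qed.
Lemma dotDr a b c : dot a (b + c) = dot a b + dot a c.
Proof. by rewrite /dot mulmxDr mxE. Qed.
Lemma dotNl a b : dot (- a) b = - dot a b.
Proof. by rewrite /dot linearN /= mulNmx mxE. Qed.
Lemma dotNr a b : dot a (- b) = - dot a b.
Proof. by rewrite /dot mulmxN mxE. Qed.
Lemma dotBl a b c : dot (a - b) c = dot a c - dot b c.
Proof. by rewrite dotDl dotNl. Qed.
Lemma dotBr a b c : dot a (b - c) = dot a b - dot a c.
Proof. by rewrite dotDr dotNr. Qed.
Lemma dotZl e a b : dot (e *: a) b = e * dot a b.
Proof. by rewrite /dot linearZ /= -scalemxAl mxE. Qed.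
Lemma dotZr e a b : dot a (e *: b) = e * dot a b.
Proof. by rewrite /dot -scalemxAr mxE. Qed.
Lemma dot0l b : dot 0 b = 0.
Proof. by rewrite /dot trmx0 mul0mx mxE. Qed.
Lemma dot0r a : dot a 0 = 0.
Proof. by rewrite /dot mulmx0 mxE. Qed.
Lemma dotC a b : dot a b = dot b a.
Proof. by rewrite /dot -[b^T *m a]trmxK trmx_mul trmxK [RHS]mxE. Qed.

Lemma dot_suml (I : Type) (r : seq I) (P : pred I) (F : I -> 'cV[R]_p) c :
  dot (\sum_(i <- r | P i) F i) c = \sum_(i <- r | P i) dot (F i) c.
Proof. by elim/big_rec2: _ => [|i y1 y2 _ <-]; rewrite ?dot0l ?dotDl. Qed.

End Dot.

Lemma dot_mull {R : comRingType} {p q : nat} (M : 'M[R]_(q, p)) a b :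
  dot (M *m a) b = dot a (M^T *m b).
Proof. by rewrite /dot trmx_mul mulmxA. Qed.

Lemma dot_mulr {R : comRingType} {p q : nat} (M : 'M[R]_(p, q)) a b :
  dot a (M *m b) = dot (M^T *m a) b.
Proof. by rewrite dotC dot_mull dotC. Qed.

Lemma qf_dot {R : realFieldType} {p : nat} (M : 'M[R]_p) a : qf M a = dot a (M *m a).
Proof. by rewrite /qf /dot mulmxA. Qed.

Lemma qfN {R : realFieldType} {p : nat} (M : 'M[R]_p) a : qf M (- a) = qf M a.
Proof. by rewrite !qf_dot mulmxN dotNl dotNr opprK. Qed.

Lemma qf0 {R : realFieldType} {p : nat} (M : 'M[R]_p) : qf M 0 = 0.
Proof. by rewrite qf_dot dot0l. Qed.

Lemma qf_mul {R : realFieldType} {p q : nat} (M : 'M[R]_p) (H : 'M[R]_(p, q)) a :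
  qf M (H *m a) = qf (H^T *m M *m H) a.
Proof. by rewrite !qf_dot dot_mull !mulmxA. Qed.

Lemma qf_add_scale {R : realFieldType} {p : nat} (M : 'M[R]_p) a b e : M^T = M ->
  qf M (a + e *: b) = qf M a + 2 * e * dot (M *m a) b + e ^+ 2 * qf M b.
Proof.
move=> sM; rewrite !qf_dot mulmxDr -scalemxAr dotDl !dotDr !dotZl !dotZr.
by rewrite [dot a (M *m b)]dotC dot_mull sM [dot b (M *m a)]dotC; ring.
Qed.

Lemma summation_by_parts {R : comRingType} {p : nat} (a b : nat)
    (z g y h : nat -> 'cV[R]_p) (M : nat -> 'M[R]_p) : (a <= b)%N ->
    (forall l, (a <= l < b)%N -> z l = g l + (M l)^T *m z l.+1) ->
    (forall l, (a <= l < b)%N -> y l.+1 = M l *m y l + h l) ->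
  \sum_(a <= l < b) dot (g l) (y l)
  = dot (z a) (y a) - dot (z b) (y b) + \sum_(a <= l < b) dot (z l.+1) (h l).
Proof.
move=> ab hz hy.
rewrite -opprB -(telescope_sumr (fun l => dot (z l) (y l)) ab) -sumrN -big_split /=.
apply: eq_big_nat => l hl; rewrite (hz l hl) (hy l hl).
by rewrite dotDl !dotDr dot_mull trmxK; ring.
Qed.

Section Entries.
Context {R : ringType} {p q : nat}.
Implicit Types a b : 'M[R]_(p, q).
Lemma mx_entryD a b i j : (a + b) i j = a i j + b i j. Proof. by rewrite mxE. Qed.
Lemma mx_entryN a i j : (- a) i j = - a i j. Proof. by rewrite mxE. Qed.
Lemma mx_entryZ e a i j : (e *: a) i j = e * a i j. Proof. by rewrite mxE. Qed.
Lemma mx_entry0 i j : (0 : 'M[R]_(p, q)) i j = 0. Proof. by rewrite mxE. Qed.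
End Entries.

Ltac mx_ring :=
  rewrite ?(mulmxDr, mulmxDl, mulmxN, mulNmx, mulmx0, scaler0) -?scalemxAr ?mulmxA;
  apply/matrixP => ? ?; rewrite ?(mx_entryD, mx_entryN, mx_entryZ, mx_entry0); ring.

Section LQ.
Variables (R : realFieldType) (n m1 m2 N : nat).
Variables (A : 'M[R]_n) (B1 : 'M[R]_(n, m1)) (B2 : 'M[R]_(n, m2)).
Variables (Q1 G1 : 'M[R]_n) (R1 : 'M[R]_m1).

Local Notation H1 := (Defs.H1 N A B1 Q1 G1 R1).
Local Notation H2 := (Defs.H2 N A B1 B2 Q1 G1 R1).
Local Notation H3 := (Defs.H3 N A B1 Q1 G1 R1).
Local Notation At := (Atl N A B1 Q1 G1 R1).
Local Notation Bt := (Btl N A B1 B2 Q1 G1 R1).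
Local Notation Ct := (Ctl N A B1 Q1 G1 R1).
Local Notation C := (Cm N A B1 B2 Q1 G1 R1).
Local Notation costate := (Defs.costate N A B1 B2 Q1 G1 R1).
Local Notation fstate := (Defs.fstate N A B1 B2 Q1 G1 R1).
Local Notation alpha := (Defs.alpha N A B1 B2 Q1 G1 R1).

Implicit Types (v w : nat -> 'cV[R]_m2) (x : 'cV[R]_n).

Lemma costate_N v l : (N <= l)%N -> costate v l = 0.
Proof. exact: brec_N. Qed.

Lemma costateS v l : (l < N)%N ->
  costate v l = (C l)^T *m v l + (At l)^T *m costate v l.+1.
Proof. exact: brecS. Qed.

Lemma fstate_t t x v : fstate t x v t = x.
Proof. exact: frec_t. Qed.

Lemma fstateS t x v l : (t <= l)%N ->
  fstate t x v l.+1 = At l *m fstate t x v l + Bt l *m v l + Ct l *m costate v l.+1.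
Proof. exact: frecS. Qed.

Lemma costate_perturb v w v' e : (forall l, v' l = v l + e *: w l) ->
  forall l, costate v' l = costate v l + e *: costate w l.
Proof.
move=> hv; apply: brec_unique => l hl; last by rewrite !costate_N // scaler0 addr0.
by rewrite hv (costateS v) // (costateS w) //; mx_ring.
Qed.

Lemma fstate_perturb t x v w v' e : (forall l, v' l = v l + e *: w l) ->
  forall l, (t <= l)%N -> fstate t x v' l = fstate t x v l + e *: fstate t 0 w l.
Proof.
move=> hv l tl.
apply: (frec_unique (M := l) (y := fun l => fstate t x v l + e *: fstate t 0 w l)).
- by rewrite !fstate_t scaler0 addr0.
- by move=> j /andP[tj _]; rewrite !fstateS // hv (costate_perturb hv); mx_ring.
- by rewrite tl leqnn.
Qed.

Lemma alpha_perturb t x v w v' e : (forall l, v' l = v l + e *: w l) ->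
  forall l, (t <= l)%N -> alpha t x v' l = alpha t x v l + e *: alpha t 0 w l.
Proof.
by move=> hv l tl; rewrite /alpha (fstate_perturb _ hv) // hv (costate_perturb hv); mx_ring.
Qed.

Lemma fstate_dynamics t x v l : (t <= l)%N ->
  fstate t x v l.+1 = A *m fstate t x v l + B1 *m alpha t x v l + B2 *m v l.
Proof. by move=> tl; rewrite fstateS // /alpha /Atl /Btl /Ctl; mx_ring. Qed.

Lemma costate_impulse k a : (k < N)%N -> forall l,
  costate (impulse k a) l
  = if (k < l)%N then 0 else (mprod At l (k - l))^T *m (C k)^T *m a.
Proof.
move=> kN; apply: brec_unique => l hl; last by rewrite ifT //; lia.
rewrite /impulse; case: (ltngtP k l) => [kl|lk|<-].
- by rewrite ifT ?mulmx0 ?addr0 //; lia.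
- rewrite ifN; last lia.
  rewrite (_ : (k - l = (k - l.+1).+1)%N); last lia.
  by rewrite mprodS trmx_mul mulmx0 add0r !mulmxA.
- by rewrite ltnSn subnn trmx1 mul1mx mulmx0 addr0.
Qed.

Local Notation is_traj k y u v :=
  (forall l, (k <= l < N)%N -> y l.+1 = A *m y l + B1 *m u l + B2 *m v l).

Section Cost.
Variables (Q G : 'M[R]_n) (Rw : 'M[R]_m1) (W : 'M[R]_m2).
Local Notation J := (Jcost N A B1 B2 Q G Rw W).

Lemma Jcost_traj k y u v : (k <= N)%N -> is_traj k y u v ->
  J k (y k) u v = \sum_(k <= l < N) (qf Q (y l) + qf Rw (u l) + qf W (v l)) + qf G (y N).
Proof.
move=> kN yS.
have Ey : forall l, (k <= l <= N)%N ->
    frec k (y k) (fun l X => A *m X + B1 *m u l + B2 *m v l) l = y l.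
  exact: frec_unique.
rewrite /Jcost Ey ?leqnn ?kN //; congr (_ + _).
by apply: eq_big_nat => l /andP[kl lN]; rewrite Ey // kl ltnW.
Qed.

Lemma Jcost_perturb k y z u v du dv u' v' e :
    Q^T = Q -> G^T = G -> Rw^T = Rw -> W^T = W -> (k <= N)%N ->
    is_traj k y u v -> is_traj k z du dv ->
    (forall l, (k <= l < N)%N -> u' l = u l + e *: du l) ->
    (forall l, (k <= l < N)%N -> v' l = v l + e *: dv l) ->
  J k (y k + e *: z k) u' v'
  = J k (y k) u v
    + 2 * e * (\sum_(k <= l < N) (dot (Q *m y l) (z l) + dot (Rw *m u l) (du l)
                                  + dot (W *m v l) (dv l)) + dot (G *m y N) (z N))
    + e ^+ 2 * J k (z k) du dv.
Proof.
move=> sQ sG sR sW kN yS zS hu hv.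
have yzS : is_traj k (fun l => y l + e *: z l) u' v'.
  by move=> l hl; rewrite yS // zS // hu // hv //; mx_ring.
rewrite (Jcost_traj kN yzS) !Jcost_traj // !qf_add_scale //.
under eq_big_nat => l hl do rewrite hu // hv // !qf_add_scale //.
by rewrite !big_split -!mulr_sumr /=; ring.
Qed.

End Cost.

Section Variation.
Variables (Q2 G2 : 'M[R]_n) (R2 : 'M[R]_m1) (W2 : 'M[R]_m2).
Variables (t k : nat) (x : 'cV[R]_n) (v : nat -> 'cV[R]_m2) (vt : 'cV[R]_m2).
Variables (Z Zb eta xi : nat -> 'cV[R]_n).
Hypotheses (tk : (t <= k)%N) (kN : (k < N)%N).

Local Notation X := (fstate t x v).
Local Notation pi := (costate v).
Local Notation imp := (impulse k vt).
Local Notation w l := (H1 l *m X l + H2 l *m v l + H3 l *m pi l.+1).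

Hypothesis ZN : Z N = G2 *m X N.
Hypothesis ZS : forall l, (t <= l < N)%N -> Z l = Q2 *m X l + A^T *m Z l.+1.
Hypothesis ZbN : Zb N = 0.
Hypothesis ZbS : forall l, (k <= l < N)%N ->
  Zb l = (H1 l)^T *m R2 *m w l - (H1 l)^T *m B1^T *m Z l.+1 + (At l)^T *m Zb l.+1.
Hypothesis ZbS_t : forall i, (t <= i < k)%N -> Zb i = (At i)^T *m Zb i.+1.
Hypothesis eta_t : eta t = 0.
Hypothesis etaS_t : forall i, (t <= i < k)%N ->
  eta i.+1 = At i *m eta i + Ct i *m (mprod At i.+1 (k.-1 - i))^T *m (C k)^T *m vt.
Hypothesis etaSk : eta k.+1 = At k *m eta k + Bt k *m vt.
Hypothesis etaS : forall l, (k.+1 <= l < N)%N -> eta l.+1 = At l *m eta l.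
Hypothesis xi_k : xi k = 0.
Hypothesis xiSk : xi k.+1 = A *m xi k - B1 *m H1 k *m eta k + Bt k *m vt.
Hypothesis xiS : forall l, (k.+1 <= l < N)%N -> xi l.+1 = A *m xi l - B1 *m H1 l *m eta l.

Lemma fstate_impulse l : (t <= l <= N)%N -> fstate t 0 imp l = eta l.
Proof.
apply: frec_unique => // j /andP[tj jN].
rewrite costate_impulse // /impulse; case: (ltngtP j k) => [jk|kj|->].
- rewrite ifN; last by rewrite -leqNgt.
  rewrite (_ : (k - j.+1 = k.-1 - j)%N); last lia.
  by rewrite mulmx0 addr0 etaS_t ?tj // !mulmxA.
- by rewrite ifT ?mulmx0 ?addr0 ?etaS ?kj // ltnS ltnW.
- by rewrite ifT ?mulmx0 ?addr0.
Qed.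

Lemma alpha_impulse l : (k <= l <= N)%N ->
  alpha t 0 imp l = - (H1 l *m eta l + H2 l *m imp l).
Proof.
move=> /andP[kl lN]; rewrite /alpha fstate_impulse ?lN ?(leq_trans tk) //.
by rewrite costate_impulse // ifT ?mulmx0 ?addr0 // ltnS.
Qed.

Lemma xi_traj : is_traj k xi (alpha t 0 imp) imp.
Proof.
move=> l /andP[kl lN]; rewrite alpha_impulse ?kl ?(ltnW lN) // /impulse.
case: (ltngtP k l) kl => // [kl|<-] _; last by rewrite xiSk /Btl; mx_ring.
by rewrite xiS ?kl //; mx_ring.
Qed.

Lemma second_variation :
  Jcost N A B1 B2 Q2 G2 R2 W2 k (xi k) (alpha t 0 imp) imp
  = \sum_(k <= l < N) qf Q2 (xi l)
    + \sum_(k.+1 <= l < N) qf ((H1 l)^T *m R2 *m H1 l) (eta l)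
    + qf W2 vt + qf G2 (xi N)
    + qf R2 (H1 k *m eta k + H2 k *m vt).
Proof.
have SR : \sum_(k <= l < N) qf R2 (alpha t 0 imp l)
    = qf R2 (H1 k *m eta k + H2 k *m vt)
      + \sum_(k.+1 <= l < N) qf ((H1 l)^T *m R2 *m H1 l) (eta l).
  rewrite (big_ltn kN) alpha_impulse ?leqnn ?(ltnW kN) // qfN /impulse eqxx.
  congr (_ + _); apply: eq_big_nat => l /andP[kl lN].
  rewrite alpha_impulse ?(ltnW kl) ?(ltnW lN) // /impulse gtn_eqF //.
  by rewrite mulmx0 addr0 qfN qf_mul.
rewrite Jcost_traj ?(ltnW kN) //; last exact: xi_traj.
by rewrite !big_split /= SR (sum_impulse (F := fun _ => qf W2)) ?qf0 //; ring.
Qed.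

Lemma Z_duality :
  \sum_(k <= l < N) dot (Q2 *m X l) (xi l) + dot (G2 *m X N) (xi N)
  = dot ((Bt k)^T *m Z k.+1) vt
    - \sum_(k <= l < N) dot ((H1 l)^T *m B1^T *m Z l.+1) (eta l).
Proof.
have hz l : (k <= l < N)%N -> Z l = Q2 *m X l + A^T *m Z l.+1.
  by move=> /andP[kl lN]; rewrite ZS // lN (leq_trans tk).
have hy l : (k <= l < N)%N ->
    xi l.+1 = A *m xi l + (Bt l *m imp l - B1 *m H1 l *m eta l).
  move=> /andP[kl lN]; rewrite /impulse.
  case: (ltngtP k l) kl => // [kl|<-] _; last by rewrite xiSk addrAC -addrA.
  by rewrite xiS ?kl ?lN // mulmx0 add0r.
have := summation_by_parts (ltnW kN) hz hy.
rewrite xi_k dot0r ZN sub0r => ->; rewrite addrAC addNr add0r.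
under eq_bigr do rewrite dotBr.
rewrite sumrB (sum_impulse (F := fun l b => dot (Z l.+1) (Bt l *m b)) vt kN) => [|l].
  2: by rewrite mulmx0 dot0r.
congr (_ - _); first exact: dot_mulr.
by apply: eq_bigr => l _; rewrite dot_mulr trmx_mul.
Qed.

Lemma Zb_duality :
  \sum_(k <= l < N) dot ((H1 l)^T *m R2 *m w l - (H1 l)^T *m B1^T *m Z l.+1) (eta l)
  = dot ((Bt k)^T *m Zb k.+1) vt
    + \sum_(t <= i < k) dot (C k *m mprod At i.+1 (k.-1 - i) *m (Ct i)^T *m Zb i.+1) vt.
Proof.
have Zb_eta_k : dot (Zb k) (eta k)
    = \sum_(t <= i < k) dot (C k *m mprod At i.+1 (k.-1 - i) *m (Ct i)^T *m Zb i.+1) vt.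
  have hz i : (t <= i < k)%N -> Zb i = 0 + (At i)^T *m Zb i.+1.
    by move=> hi; rewrite add0r ZbS_t.
  have := summation_by_parts tk hz etaS_t.
  rewrite big1 => [|i _]; last by rewrite dot0l.
  rewrite eta_t dot0r sub0r => /eqP; rewrite eq_sym addrC subr_eq0 => /eqP <-.
  by apply: eq_bigr => i _; rewrite dot_mulr !trmx_mul !trmxK !mulmxA.
have hy l : (k <= l < N)%N -> eta l.+1 = At l *m eta l + Bt l *m imp l.
  move=> /andP[kl lN]; rewrite /impulse.
  case: (ltngtP k l) kl => // [kl|<-] _; last by rewrite etaSk.
  by rewrite etaS ?kl ?lN // mulmx0 addr0.
have := summation_by_parts (ltnW kN) ZbS hy.
rewrite ZbN dot0l subr0 Zb_eta_k => ->; rewrite addrC.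
rewrite (sum_impulse (F := fun l b => dot (Zb l.+1) (Bt l *m b)) vt kN) => [|l].
  2: by rewrite mulmx0 dot0r.
by rewrite dot_mulr.
Qed.

Lemma control_variation :
  \sum_(k <= l < N) dot (R2 *m alpha t x v l) (alpha t 0 imp l)
  = \sum_(k <= l < N) dot ((H1 l)^T *m R2 *m w l) (eta l)
    + dot ((H2 k)^T *m R2 *m w k) vt.
Proof.
rewrite -(sum_impulse (F := fun l b => dot ((H2 l)^T *m R2 *m w l) b) vt kN) => [|l].
  2: exact: dot0r.
rewrite -big_split; apply: eq_big_nat => l /andP[kl lN].
rewrite alpha_impulse ?kl ?(ltnW lN) // /alpha mulmxN dotNl dotNr opprK.
by rewrite dotDr !dot_mulr !mulmxA.
Qed.

Lemma first_variation :
  \sum_(k <= l < N) (dot (Q2 *m X l) (xi l) + dot (R2 *m alpha t x v l) (alpha t 0 imp l)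
                     + dot (W2 *m v l) (imp l)) + dot (G2 *m X N) (xi N)
  = dot ((Bt k)^T *m Z k.+1 + (Bt k)^T *m Zb k.+1 + W2 *m v k + (H2 k)^T *m R2 *m w k
         + \sum_(t <= i < k) C k *m mprod At i.+1 (k.-1 - i) *m (Ct i)^T *m Zb i.+1) vt.
Proof.
have := Zb_duality; under eq_bigr do rewrite dotBl; rewrite sumrB => Zb_eq.
rewrite !big_split /= (sum_impulse (F := fun l => dot (W2 *m v l)) vt kN) => [|l].
  2: exact: dot0r.
rewrite control_variation !dotDl dot_suml.
move: Z_duality Zb_eq; lra.
Qed.

End Variation.

End LQ.

Theorem proposition1 (R : realFieldType) (n m1 m2 N t : nat)
  (A : 'M[R]_n) (B1 : 'M[R]_(n, m1)) (B2 : 'M[R]_(n, m2))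
  (Q1 Q2 G1 G2 : 'M[R]_n) (R1 R2 : 'M[R]_m1) (W1 W2 : 'M[R]_m2) :
  (2 < N)%N -> (t < N)%N ->
  nonneg_def Q1 -> nonneg_def Q2 -> nonneg_def G1 -> nonneg_def G2 ->
  nonneg_def R1 -> nonneg_def R2 -> nonneg_def W1 -> nonneg_def W2 ->
  (forall k, (t <= k < N)%N -> pos_def (Mmat N A B1 Q1 G1 R1 k)) ->
  let H1 := H1 N A B1 Q1 G1 R1 in
  let H2 := H2 N A B1 B2 Q1 G1 R1 in
  let H3 := H3 N A B1 Q1 G1 R1 in
  let At := Atl N A B1 Q1 G1 R1 in
  let Bt := Btl N A B1 B2 Q1 G1 R1 in
  let Ct := Ctl N A B1 Q1 G1 R1 in
  let C := Cm N A B1 B2 Q1 G1 R1 in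
  forall (x : 'cV[R]_n) (v : nat -> 'cV[R]_m2) (k : nat) (vt : 'cV[R]_m2) (eps : R),
  (t <= k < N)%N ->
  let veps := fun l : nat => if l == k then v k + eps *: vt else v l in
  let X := fstate N A B1 B2 Q1 G1 R1 t x v in
  let pi := costate N A B1 B2 Q1 G1 R1 v in
  forall (Z Zb eta xi : nat -> 'cV[R]_n),
  (* Z *)
  Z N = G2 *m X N ->
  (forall l, (t <= l < N)%N -> Z l = Q2 *m X l + A^T *m Z l.+1) ->
  (* Zbar^(k) *)
  Zb N = 0 ->
  (forall l, (k <= l < N)%N ->
     Zb l = (H1 l)^T *m R2 *m (H1 l *m X l + H2 l *m v l + H3 l *m pi l.+1)
            - (H1 l)^T *m B1^T *m Z l.+1 + (At l)^T *m Zb l.+1) ->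
  (forall i, (t <= i < k)%N -> Zb i = (At i)^T *m Zb i.+1) ->
  (* eta^(k) *)
  eta t = 0 ->
  (forall i, (t <= i < k)%N ->
     eta i.+1 = At i *m eta i
                + Ct i *m (mprod At i.+1 (k.-1 - i))^T *m (C k)^T *m vt) ->
  eta k.+1 = At k *m eta k + Bt k *m vt ->
  (forall l, (k.+1 <= l < N)%N -> eta l.+1 = At l *m eta l) ->
  (* xi *)
  xi k = 0 ->
  xi k.+1 = A *m xi k - B1 *m H1 k *m eta k + Bt k *m vt ->
  (forall l, (k.+1 <= l < N)%N -> xi l.+1 = A *m xi l - B1 *m H1 l *m eta l) ->
  let Jhat :=
    \sum_(k <= l < N) qf Q2 (xi l)
    + \sum_(k.+1 <= l < N) qf ((H1 l)^T *m R2 *m H1 l) (eta l)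
    + qf W2 vt + qf G2 (xi N)
    + qf R2 (H1 k *m eta k + H2 k *m vt) in
  let grad :=
    (Bt k)^T *m Z k.+1 + (Bt k)^T *m Zb k.+1 + W2 *m v k
    + (H2 k)^T *m R2 *m (H1 k *m X k + H2 k *m v k + H3 k *m pi k.+1)
    + \sum_(t <= i < k) C k *m mprod At i.+1 (k.-1 - i) *m (Ct i)^T *m Zb i.+1 in
  Jcost N A B1 B2 Q2 G2 R2 W2 k (X k) (alpha N A B1 B2 Q1 G1 R1 t x veps) veps
  - Jcost N A B1 B2 Q2 G2 R2 W2 k (X k) (alpha N A B1 B2 Q1 G1 R1 t x v) v
  = 2 * eps * (grad^T *m vt) 0 0 + eps ^+ 2 * Jhat.
Proof.
move=> _ _ _ [sQ2 _] _ [sG2 _] _ [sR2 _] _ [sW2 _] _ H1 H2 H3 At Bt Ct C.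
move=> x v k vt eps /andP[tk kN] veps X pi Z Zb eta xi ZN ZS ZbN ZbS ZbS_t.
move=> eta_t etaS_t etaSk etaS xi_k xiSk xiS Jhat grad.
have veps_imp l : veps l = v l + eps *: impulse k vt l.
  by rewrite /veps /impulse; case: eqP => [->|_]; rewrite ?scaler0 ?addr0.
have X_traj l : (k <= l < N)%N ->
    X l.+1 = A *m X l + B1 *m alpha N A B1 B2 Q1 G1 R1 t x v l + B2 *m v l.
  by move=> /andP[kl _]; apply: fstate_dynamics; exact: leq_trans kl.
have alpha_veps l : (k <= l < N)%N ->
    alpha N A B1 B2 Q1 G1 R1 t x veps l = alpha N A B1 B2 Q1 G1 R1 t x v l
      + eps *: alpha N A B1 B2 Q1 G1 R1 t 0 (impulse k vt) l.
  by move=> /andP[kl _]; apply: alpha_perturb (leq_trans tk kl).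
have xi_tr := xi_traj tk kN eta_t etaS_t etaSk etaS xiSk xiS.
have := Jcost_perturb sQ2 sG2 sR2 sW2 (ltnW kN) X_traj xi_tr alpha_veps
  (fun l _ => veps_imp l).
rewrite (second_variation Q2 G2 R2 W2 tk kN eta_t etaS_t etaSk etaS xiSk xiS).
rewrite (first_variation W2 tk kN ZN ZS ZbN ZbS ZbS_t
          eta_t etaS_t etaSk etaS xi_k xiSk xiS).
rewrite xi_k scaler0 addr0 => ->.
by rewrite addrAC [_ + _ - _]addrAC subrr add0r.
Qed.
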